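(* Let $\mathcal H$ be a family of graphs. The following are equivalent: (i) there is a constant $c=c(\mathcal H)$ such that every (not necessarily connected) $\mathcal H$-free graph $G$ has fewer than $c$ vertices $v$ with $\mathrm{sdeg}(v)\ge 2$; (ii) there is a positive integer $n$ such that $\mathcal H\le \{K_n^*,\ nP_3,\ K_{1,n}^*\}$.
   Context: All graphs are finite, simple, undirected. For graphs $H_1,H_2$, write $H_1\prec H_2$ if $H_2$ contains an induced subgraph isomorphic to $H_1$. A graph $G$ is $\mathcal H$-free if no $H\in\mathcal H$ satisfies $H\prec G$. For families $\mathcal H_1,\mathcal H_2$, write $\mathcal H_1\le\mathcal H_2$ if for every $H_2\in\mathcal H_2$ there is $H_1\in\mathcal H_1$ with $H_1\prec H_2$. For a vertex $v$ of $G$, the sharp degree is $\mathrm{sdeg}(v)=c(G-v)-c(G)+1$, where $c(\cdot)$ is the number of connected components. $P_3$ is the path on $3$ vertices; $nG$ is the disjoint union of $n$ copies of $G$. $K_{1,n}^*$ is obtained from the star $K_{1,n}$ by attaching a new pendant vertex to each leaf; $K_n^*$ is obtained from $K_n$ by attaching a new pendant vertex to each vertex. *)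

From mathcomp Require Import all_boot all_order all_algebra.
Set Implicit Arguments. Unset Strict Implicit. Unset Printing Implicit Defensive.

Record graph := Graph {
  gn : nat;
  gadj : rel 'I_gn;
  gsym : symmetric gadj;
  girr : irreflexive gadj }.
Arguments gadj : clear implicits.

Definition symadj n (r : rel 'I_n) : rel 'I_n :=
  fun x y => (x != y) && (r x y || r y x).

Lemma symadj_sym n (r : rel 'I_n) : symmetric (symadj r).
Proof. by move=> x y; rewrite /symadj eq_sym orbC. Qed.

Lemma symadj_irr n (r : rel 'I_n) : irreflexive (symadj r).
Proof. by move=> x; rewrite /symadj eqxx. Qed.

Definition mkgraph n (r : rel 'I_n) : graph :=
  @Graph n (symadj r) (@symadj_sym n r) (@symadj_irr n r).

Definition induced (H1 H2 : graph) : Prop :=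
  exists f : 'I_(gn H1) -> 'I_(gn H2),
    injective f /\ forall x y, gadj H2 (f x) (f y) = gadj H1 x y.

Definition gfamily := graph -> Prop.

Definition Hfree (F : gfamily) (G : graph) : Prop :=
  forall H, F H -> ~ induced H G.

Definition fam_le (F1 F2 : gfamily) : Prop :=
  forall H2, F2 H2 -> exists2 H1, F1 H1 & induced H1 H2.

Definition restr (G : graph) (S : {set 'I_(gn G)}) : rel 'I_(gn G) :=
  fun x y => [&& x \in S, y \in S & gadj G x y].

Definition ncomp (G : graph) (S : {set 'I_(gn G)}) : nat :=
  #|[set [set y in S | connect (@restr G S) x y] | x in S]|.

Definition sdeg (G : graph) (v : 'I_(gn G)) : int :=
  ((@ncomp G (~: [set v]))%:Z - (@ncomp G [set: 'I_(gn G)])%:Z + 1)%R.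

(* K_n^* : K_n (vertices 0..n-1) with pendant n+i attached to i. *)
Definition Kstar (n : nat) : graph :=
  @mkgraph (n + n) (fun x y => ((x < n) && (y < n)) || ((x < n) && (y == x + n :> nat))).

(* n P_3 : copy k has vertices 3k, 3k+1, 3k+2 with middle vertex 3k+1. *)
Definition nP3 (n : nat) : graph :=
  @mkgraph (3 * n) (fun x y => (x %/ 3 == y %/ 3) && (x %% 3 == 1) && (y %% 3 != 1)).

(* K_{1,n}^* : centre 0, leaves 1..n, pendant n+i attached to leaf i. *)
Definition K1star (n : nat) : graph :=
  @mkgraph (n + n).+1 (fun x y =>
    ((x == 0 :> nat) && (0 < y <= n)) || ((0 < x <= n) && (y == x + n :> nat))).

Definition three_fam (n : nat) : gfamily :=
  fun H => H = Kstar n \/ H = nP3 n \/ H = K1star n.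

(* A vertex has sharp degree at least 2 exactly when it is a cut vertex. Each of
   K_n^*, n P_3 and K_{1,n}^* has at least n cut vertices, which gives (i) => (ii).
   Conversely, iterated Ramsey arguments show that a graph with enormously many cut
   vertices induces one of the three graphs. Many pairwise disconnected cut vertices give
   n P_3, since every cut vertex is the middle of an induced P_3. Otherwise many of them
   lie in the component of a root r; if many have distinct distances to r, one is far
   from r and its shortest path to r contains n P_3. In the remaining case many cut
   vertices v lie at the same distance from r, and each has a neighbour a(v) that v
   separates from r; these pendants are pairwise nonadjacent. Ramsey on the cut vertices,
   their parents towards r and the adjacencies between them yields K_n^* (a clique of
   cut vertices or of parents, with pendants), K_{1,n}^* (a parent adjacent to many of the
   cut vertices) or n P_3 (the paths parent(v) - v - a(v)). *)

From mathcomp Require Import all_boot all_order all_algebra zify.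
From Stdlib Require Import Classical.
Set Implicit Arguments. Unset Strict Implicit. Unset Printing Implicit Defensive.

Section CutVertices.
Variable G : graph.
Local Notation V := 'I_(gn G).
Local Notation adj := (gadj G).

Lemma connect_adj_sym : connect_sym adj.
Proof. exact/sym_connect_sym/gsym. Qed.

Lemma restr_connect_sym (S : {set V}) : connect_sym (restr S).
Proof. by apply: sym_connect_sym => x y; rewrite /restr gsym andbCA. Qed.

Definition adj_del (v : V) : rel V := restr (~: [set v]).

Lemma adj_delE v x y : adj_del v x y = [&& x != v, y != v & adj x y].
Proof. by rewrite /adj_del /restr !in_setC !in_set1. Qed.

Lemma connect_del_sub v x y : connect (adj_del v) x y -> connect adj x y.
Proof. by apply: connect_sub => a b; rewrite adj_delE => /and3P[_ _ /connect1]. Qed.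

Definition cut_vertex (v : V) := [exists x, exists y,
  [&& x != v, y != v, connect adj x y & ~~ connect (adj_del v) x y]].

Lemma connect_through_cut v x y :
  x != v -> connect adj x y -> ~~ connect (adj_del v) x y -> connect adj x v.
Proof.
move=> xv /connectP[p xp ->] xny; apply: contraNT xny => xnv.
apply/connectP; exists p => //.
apply: (sub_in_path (P := [pred z | connect adj x z])); last exact: xp.
  move=> a b /[!inE] xa xb ab; rewrite adj_delE ab andbT.
  by apply/andP; split; apply: contraNneq xnv => <-.
by apply/allP => z; apply: path_connect xp z.
Qed.

Lemma connect_last_neighbour v y : y != v -> connect adj y v ->
  exists a, adj a v /\ connect (adj_del v) y a.
Proof.
move=> + /connectP[p]; elim: p y => [|z p IH] y yv /=; first by move=> _ vE; rewrite vE eqxx in yv.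
case/andP=> yz zp vE; have [<-|zv] := eqVneq z v; first by exists y.
have [a [av za]] := IH z zv zp vE; exists a; split=> //.
by apply: connect_trans za; apply: connect1; rewrite adj_delE yv zv.
Qed.

Lemma cut_vertex_neighbours v : cut_vertex v ->
  exists a b, [/\ adj v a, adj v b, a != b & ~~ adj a b].
Proof.
case/existsP=> x /existsP[y /and4P[xv yv xy xny]].
have yx : ~~ connect (adj_del v) y x by rewrite restr_connect_sym.
have [a [av xa]] := connect_last_neighbour xv (connect_through_cut xv xy xny).
have [b [bv yb]] := connect_last_neighbour yv
  (connect_through_cut yv (etrans (connect_adj_sym y x) xy) yx).
have an : a != v by apply: contraTneq av => ->; rewrite girr.
have bn : b != v by apply: contraTneq bv => ->; rewrite girr.
have xnb : ~~ connect (adj_del v) a b.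
  apply: contra xny => ab; apply: connect_trans xa (connect_trans ab _).
  by rewrite restr_connect_sym.
exists a, b; rewrite (gsym v a) (gsym v b) av bv; split=> //.
  by apply: contraNneq xnb => ->.
by apply: contra xnb => ab; apply: connect1; rewrite adj_delE an bn.
Qed.

Lemma pendant_cut_vertex v x y :
  adj v x -> (forall z, adj x z -> z = v) -> adj v y -> y != x -> cut_vertex v.
Proof.
move=> vx xpend vy yx; apply/existsP; exists x; apply/existsP; exists y.
have xv : x != v by apply: contraTneq vx => ->; rewrite girr.
have yv : y != v by apply: contraTneq vy => ->; rewrite girr.
have xy : connect adj x y by apply: connect_trans (connect1 _) (connect1 vy); rewrite gsym.
rewrite xv yv xy /=; apply/connectP => -[[|z p] /=]; first by move=> _ yE; rewrite yE eqxx in yx.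
by case/andP; rewrite adj_delE => /and3P[_ zv /xpend zE]; rewrite zE eqxx in zv.
Qed.

Definition comp (S : {set V}) x := [set y in S | connect (restr S) x y].

Lemma comp_eq (S : {set V}) x y : x \in S -> connect (restr S) x y -> comp S x = comp S y.
Proof.
move=> xS xy; apply/setP => z; rewrite !inE; case: (z \in S) => //=.
have yx : connect (restr S) y x by rewrite restr_connect_sym.
by apply/idP/idP; [apply: connect_trans yx | apply: connect_trans xy].
Qed.

Lemma comp_neq (S : {set V}) x y : y \in S -> ~~ connect (restr S) x y -> comp S x != comp S y.
Proof.
move=> yS; apply: contraNneq => xyE.
have : y \in comp S y by rewrite inE yS connect0.
by rewrite -xyE inE => /andP[].
Qed.

Lemma restrT : restr [set: V] =2 adj.
Proof. by move=> x y; rewrite /restr !in_setT. Qed.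

Lemma compT x y : connect adj x y -> comp setT x = comp setT y.
Proof. by move=> xy; apply: comp_eq; rewrite ?in_setT // (eq_connect restrT). Qed.

Lemma ncomp_del_le v : ~~ cut_vertex v -> ncomp (~: [set v]) <= ncomp [set: V].
Proof.
move=> ncut; set S := ~: [set v]; rewrite /ncomp -/(comp S) -/(comp setT).
have joint x y : x \in S -> y \in S -> connect adj x y -> connect (adj_del v) x y.
  move=> xS yS xy; apply: contraNT ncut => xny; apply/existsP; exists x.
  by apply/existsP; exists y; move: xS yS; rewrite !in_setC !in_set1 => -> ->; rewrite xy.
(* As [v] is not a cut vertex, each component of [G - v] is recovered from the component
   of [G] containing it. *)
pose back (C : {set V}) := comp S (odflt v [pick z in C :&: S]).
have -> : comp S @: S = back @: (comp setT @: S).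
  rewrite -imset_comp; apply: eq_in_imset => z zS /=; rewrite /back.
  case: pickP => [z' | /(_ z)]; last by rewrite in_setI zS andbT inE in_setT connect0.
  rewrite in_setI inE in_setT /= => /andP[zz' z'S].
  by apply: comp_eq => //; apply: joint; rewrite -?(eq_connect restrT).
by rewrite (leq_trans (leq_imset_card _ _)) // subset_leq_card ?imsetS ?subsetT.
Qed.

Lemma ncomp_del_lt v : cut_vertex v -> ncomp [set: V] < ncomp (~: [set v]).
Proof.
case/existsP=> x /existsP[y /and4P[xv yv xy xny]].
set S := ~: [set v]; rewrite /ncomp -/(comp S) -/(comp setT).
have xS : x \in S by rewrite in_setC in_set1.
have yS : y \in S by rewrite in_setC in_set1.
have -> : comp setT @: setT = comp setT @: S.
  apply/eqP; rewrite eqEsubset (imsetS _ (subsetT S)) andbT.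
  apply/subsetP => _ /imsetP[z _ ->]; have [->|zv] := eqVneq z v.
    by rewrite -(compT (connect_through_cut xv xy xny)) imset_f.
  by rewrite imset_f // in_setC in_set1.
(* Sending each component of [G - v] to the component of [G] containing it is onto,
   but identifies the components of [x] and [y]. *)
pose up (C : {set V}) := comp setT (odflt v [pick z in C]).
have upE z : z \in S -> up (comp S z) = comp setT z.
  move=> zS; rewrite /up; case: pickP => [z' /[!inE] /andP[_ zz'] | /(_ z)] /=.
    by rewrite (compT (connect_del_sub zz')).
  by rewrite inE zS connect0.
have -> : comp setT @: S = up @: (comp S @: S).
  by rewrite -imset_comp; apply: eq_in_imset => z zS /=; rewrite upE.
rewrite ltn_neqAle leq_imset_card andbT; apply/negP => /imset_injP up_inj.
have := up_inj _ _ (imset_f _ xS) (imset_f _ yS); rewrite !upE // (compT xy).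
by move=> /(_ erefl) /eqP; apply/negP/comp_neq.
Qed.

Lemma sdeg_ge2E v : (2%:Z <= sdeg v)%R = cut_vertex v.
Proof.
rewrite /sdeg; have [cut|ncut] := boolP (cut_vertex v).
  by have := ncomp_del_lt cut; lia.
by have := ncomp_del_le ncut; lia.
Qed.

End CutVertices.

Section Ramsey.
Variable N : nat.
Local Notation T := 'I_N.
Variable e : rel T.

Definition homogeneous (W : {set T}) (b : bool) :=
  {in W &, forall x y : T, x < y -> e x y = b}.

Lemma homogeneous_setU1 (x0 : T) (W : {set T}) b : {in W, forall y : T, x0 < y /\ e x0 y = b} ->
  homogeneous W b -> homogeneous (x0 |: W) b.
Proof.
move=> x0W hW x y /setU1P[->|xW] /setU1P[->|yW]; rewrite ?ltnn //.
- by case/x0W: yW.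
- by case/x0W: xW => x0x _ /(ltn_trans x0x); rewrite ltnn.
- exact: hW.
Qed.

Definition above (x0 : T) (X : {set T}) b := [set y in X | (x0 < y) && (e x0 y == b)].

Lemma card_above x0 (X : {set T}) : x0 \in X -> {in X, forall y : T, x0 <= y} ->
  #|X| = (#|above x0 X true| + #|above x0 X false|).+1.
Proof.
move=> x0X x0_min; rewrite (cardsD1 x0) x0X add1n -cardsUI; congr _.+1.
have -> : above x0 X true :&: above x0 X false = set0.
  by apply/setP => y; rewrite !inE; case: (e x0 y); rewrite !andbF.
rewrite cards0 addn0; apply: eq_card => y; rewrite !inE.
have [->|yx0] /= := eqVneq y x0; first by rewrite ltnn !andbF.
case yX: (y \in X) => //=; have x0y : x0 < y.
  by rewrite ltn_neqAle x0_min // andbT; apply: contraNneq yx0 => /val_inj ->.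
by rewrite x0y; case: (e x0 y).
Qed.

Lemma ramsey_bool (a : bool -> nat) (X : {set T}) : 2 ^ (a true + a false) <= #|X| ->
  exists b, exists2 W : {set T}, W \subset X & a b <= #|W| /\ homogeneous W b.
Proof.
move Es : (a true + a false) => s; elim: s a Es X => [|s IH] a Es X hX.
  by exists true, set0; rewrite ?sub0set // cards0; split=> [|x y]; [lia | rewrite inE].
have [/existsP[b /eqP ab0] | /existsPn a_pos] := boolP [exists b, a b == 0].
  by exists b, set0; rewrite ?sub0set // ab0; split=> // x y; rewrite inE.
have [x0 x0X x0_min] : exists2 x0, x0 \in X & {in X, forall y : T, x0 <= y}.
  have /set0Pn[x xX] : X != set0 by rewrite -card_gt0 (leq_trans _ hX) ?expn_gt0.
  by case: (arg_minnP val xX) => x0 ? ?; exists x0.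
(* Apart from its least element [x0], [X] splits by the colour of the edge from [x0];
   recurse into a large part. *)
have [b hb] : exists b, 2 ^ s <= #|above x0 X b|.
  by case: (leqP (2 ^ s) #|above x0 X true|) => h; [exists true | exists false];
    move: hX; rewrite (card_above x0X x0_min) expnS; lia.
pose a' c := if c == b then (a c).-1 else a c.
have Es' : a' true + a' false = s.
  by have := a_pos true; have := a_pos false; case: b {hb} @a'; rewrite /=; lia.
have [b' [W Wab [aW hW]]] := IH a' Es' _ hb.
have WX : W \subset X by apply: subset_trans Wab _; apply/subsetP => y; rewrite inE => /andP[].
have [eb|nb] := eqVneq b' b; last first.
  by exists b', W => //; move: aW; rewrite /a' (negbTE nb).
subst b'; exists b, (x0 |: W).
  by rewrite subUset sub1set x0X.
have x0W : {in W, forall y : T, x0 < y /\ e x0 y = b}.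
  by move=> y /(subsetP Wab); rewrite inE => /and3P[_ ? /eqP].
rewrite cardsU1 (_ : x0 \notin W) ?add1n; last by apply/negP => /x0W[]; rewrite ltnn.
split; last exact: homogeneous_setU1.
by move: aW; rewrite /a' eqxx; lia.
Qed.

Lemma ramsey m (X : {set T}) : 4 ^ m <= #|X| ->
  exists b, exists2 W : {set T}, W \subset X & m <= #|W| /\ homogeneous W b.
Proof.
move=> hX; have [|b [W WX hW]] := @ramsey_bool (fun=> m) X; last by exists b, W.
by rewrite addnn -mul2n expnM.
Qed.

Lemma homogeneous_sym (W : {set T}) b : symmetric e -> homogeneous W b ->
  {in W &, forall x y : T, x != y -> e x y = b}.
Proof.
move=> eC hW x y xW yW; case: (ltngtP x y) => [xy|yx|/val_inj->]; last by rewrite eqxx.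
- by rewrite hW.
- by rewrite eC hW.
Qed.

Lemma homogeneous_min (W : {set T}) b : W != set0 -> homogeneous W b ->
  exists2 v0, v0 \in W & {in W, forall v, v != v0 -> e v0 v = b}.
Proof.
case/set0Pn=> x xW hW; have [v0 v0W v0_min] := arg_minnP val xW.
by exists v0 => // v vW vv0; apply: hW; rewrite // ltn_neqAle v0_min // andbT eq_sym.
Qed.

Lemma homogeneous_max (W : {set T}) b : W != set0 -> homogeneous W b ->
  exists2 v0, v0 \in W & {in W, forall v, v != v0 -> e v v0 = b}.
Proof.
case/set0Pn=> x xW hW; have [v0 v0W v0_max] := arg_maxnP val xW.
exists v0 => // v vW vv0; apply: hW; rewrite // ltn_neqAle.
by apply/andP; split; [exact: vv0 | exact: v0_max].
Qed.

End Ramsey.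

Lemma pick_injective (T : finType) (W : {set T}) n : n <= #|W| ->
  exists f : 'I_n -> T, injective f /\ forall i, f i \in W.
Proof.
move=> nW; exists (fun i => enum_val (widen_ord nW i)); split=> [i j /enum_val_inj|i].
  by move/(congr1 val) => /= /val_inj.
exact: enum_valP.
Qed.

Lemma induced_trans A B C : induced A B -> induced B C -> induced A C.
Proof.
by case=> f [f_inj fE] [g [g_inj gE]]; exists (g \o f); split=> [|x y /=];
  [apply: inj_comp | rewrite gE fE].
Qed.

Lemma induced_of_map (H G : graph) (f : 'I_(gn H) -> 'I_(gn G)) :
  (forall x y, x != y -> f x != f y /\ gadj G (f x) (f y) = gadj H x y) ->
  induced H G.
Proof.
move=> fE; exists f; split=> [x y fxy | x y]; first by apply/eqP; apply: contraTT isT => /fE[/eqP].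
by have [->|/fE[]//] := eqVneq x y; rewrite !girr.
Qed.

Lemma Kstar_adjE n (u w : 'I_n + 'I_n) :
  gadj (Kstar n) (unsplit u) (unsplit w) =
  match u, w with
  | inl i, inl j => i != j
  | inl i, inr j | inr j, inl i => i == j
  | inr _, inr _ => false
  end.
Proof.
by case: u w => i [] j; rewrite /= /symadj /= -!val_eqE /=;
  have := ltn_ord i; have := ltn_ord j; lia.
Qed.

Definition K1star_vertex n (o : option ('I_n + 'I_n)) : 'I_(gn (K1star n)) :=
  if o is Some u then lift ord0 (unsplit u) else ord0.

Definition K1star_role n (x : 'I_(gn (K1star n))) : option ('I_n + 'I_n) :=
  omap split (unlift ord0 x).

Lemma K1star_roleK n : cancel (@K1star_role n) (@K1star_vertex n).
Proof. by move=> x; rewrite /K1star_role; case: unliftP => [j|] -> //=; rewrite splitK. Qed.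

Lemma K1star_vertexK n : cancel (@K1star_vertex n) (@K1star_role n).
Proof. by case=> [u|]; rewrite /K1star_role /= ?liftK /= ?unsplitK // unlift_none. Qed.

(* [None] is the centre, [Some (inl i)] a leaf and [Some (inr i)] its pendant. *)
Lemma K1star_adjE n (o o' : option ('I_n + 'I_n)) :
  gadj (K1star n) (K1star_vertex o) (K1star_vertex o') =
  match o, o' with
  | None, Some (inl _) | Some (inl _), None => true
  | Some (inl i), Some (inr j) | Some (inr j), Some (inl i) => i == j
  | _, _ => false
  end.
Proof.
by case: o o' => [[] i|] [[] j|]; rewrite /= /symadj /= -?val_eqE /= /bump /=;
  (try have := ltn_ord i); (try have := ltn_ord j); lia.
Qed.

Lemma nP3_vertex_subproof n (qs : 'I_n * 'I_3) : 3 * qs.1 + qs.2 < 3 * n.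
Proof. by have := ltn_ord qs.1; have := ltn_ord qs.2; lia. Qed.

Lemma nP3_copy_subproof n (x : 'I_(3 * n)) : x %/ 3 < n.
Proof. by have := ltn_ord x; lia. Qed.

(* The vertex of role [s] in the [q]-th copy of [P_3]; role [1] is the middle vertex. *)
Definition nP3_vertex n (qs : 'I_n * 'I_3) : 'I_(gn (nP3 n)) :=
  Ordinal (nP3_vertex_subproof qs).

Definition nP3_role n (x : 'I_(gn (nP3 n))) : 'I_n * 'I_3 :=
  (Ordinal (nP3_copy_subproof x), Ordinal (ltn_pmod x (isT : 0 < 3))).

Lemma nP3_roleK n : cancel (@nP3_role n) (@nP3_vertex n).
Proof. by move=> x; apply: val_inj; rewrite /= {3}(divn_eq x 3) mulnC. Qed.

Lemma nP3_vertexK n : cancel (@nP3_vertex n) (@nP3_role n).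
Proof.
by case=> q s; congr pair; apply: val_inj => /=; have := ltn_ord s; lia.
Qed.

Lemma nP3_adjE n (qs qs' : 'I_n * 'I_3) :
  gadj (nP3 n) (nP3_vertex qs) (nP3_vertex qs') =
  (qs.1 == qs'.1) && ((val qs.2 == 1) != (val qs'.2 == 1)).
Proof.
case: qs qs' => q s [q' s']; rewrite /= /symadj /= -!val_eqE /=.
by have := ltn_ord s; have := ltn_ord s'; lia.
Qed.

Section Embeddings.
Variable G : graph.
Local Notation V := 'I_(gn G).
Local Notation adj := (gadj G).

Lemma induced_Kstar n (c p : 'I_n -> V) :
  (forall i j, i != j -> [/\ c i != c j, adj (c i) (c j), p i != p j & ~~ adj (p i) (p j)]) ->
  (forall i j, c i != p j /\ adj (c i) (p j) = (i == j)) ->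
  induced (Kstar n) G.
Proof.
move=> cc cp; pose f (x : 'I_(n + n)) := match split x with inl i => c i | inr j => p j end.
apply: (@induced_of_map (Kstar n) G f) => x y.
rewrite -(splitK x) -(splitK y) (can_eq unsplitK) Kstar_adjE /f !unsplitK.
case: (split x) => i; case: (split y) => j ij.
- by have [? ? _ _] := cc i j ij; rewrite ij.
- exact: cp.
- by have [? ?] := cp j i; rewrite eq_sym gsym.
- by have [_ _ ? /negbTE] := cc i j ij.
Qed.

Lemma induced_K1star n (z : V) (c p : 'I_n -> V) :
  (forall i, [/\ adj z (c i), z != p i & ~~ adj z (p i)]) ->
  (forall i j, i != j -> [/\ c i != c j, ~~ adj (c i) (c j), p i != p j & ~~ adj (p i) (p j)]) ->
  (forall i j, c i != p j /\ adj (c i) (p j) = (i == j)) ->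
  induced (K1star n) G.
Proof.
move=> zcp cc cp.
have zc i : z != c i by have [zci _ _] := zcp i; apply: contraTneq zci => ->; rewrite girr.
pose f x := match K1star_role x with
  | None => z | Some (inl i) => c i | Some (inr j) => p j end.
apply: (@induced_of_map (K1star n) G f) => x y.
rewrite -(K1star_roleK x) -(K1star_roleK y) (can_eq (@K1star_vertexK n)) K1star_adjE.
rewrite /f !K1star_vertexK.
case: (K1star_role x) => [[i|i]|]; case: (K1star_role y) => [[j|j]|] //= xy.
- by have [? /negbTE ? _ _] := cc i j xy.
- by have [? _ _] := zcp i; rewrite eq_sym gsym zc.
- by have [? ?] := cp j i; rewrite eq_sym gsym.
- by have [_ _ ? /negbTE] := cc i j xy.
- by have [_ ? /negbTE ?] := zcp i; rewrite eq_sym gsym.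
- by have [? _ _] := zcp j.
- by have [_ ? /negbTE] := zcp j.
Qed.

Lemma induced_nP3 n (a m b : 'I_n -> V) :
  (forall i, [/\ adj (m i) (a i), adj (m i) (b i), a i != b i & ~~ adj (a i) (b i)]) ->
  (forall i j, i != j -> forall x y,
     x \in [:: a i; m i; b i] -> y \in [:: a j; m j; b j] -> x != y /\ ~~ adj x y) ->
  induced (nP3 n) G.
Proof.
move=> P3 apart; pose t i := [:: a i; m i; b i].
pose f x := let: (q, s) := nP3_role x in nth (m q) (t q) s.
apply: (@induced_of_map (nP3 n) G f) => x y.
rewrite -(nP3_roleK x) -(nP3_roleK y) (can_eq (@nP3_vertexK n)) nP3_adjE /f !nP3_vertexK.
case: (nP3_role x) => q s; case: (nP3_role y) => q' s' /=.
have [<-|qq] /= := eqVneq q q'; last first.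
  by move=> _; have [-> /negbTE ->] := apart _ _ qq _ _
    (@mem_nth _ (m q) (t q) s (ltn_ord s)) (@mem_nth _ (m q') (t q') s' (ltn_ord s')).
rewrite xpair_eqE eqxx /= => ss; have [ma mb ab nab] := P3 q.
have ma' : m q != a q by apply: contraTneq ma => ->; rewrite girr.
have mb' : m q != b q by apply: contraTneq mb => ->; rewrite girr.
case: s ss => -[|[|[|?]]] //= ?; case: s' => -[|[|[|?]]] //= ? ss;
  rewrite ?(eq_sym (a q)) ?(eq_sym (b q) (m q)) ?(gsym (a q)) ?(gsym (b q) (m q)) //.
all: by rewrite ?(eq_sym (b q)) ?(gsym (b q)) ?(negbTE nab).
Qed.

End Embeddings.

Section BreadthFirst.
Variable G : graph.
Local Notation V := 'I_(gn G).
Local Notation adj := (gadj G).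
Variable r : V.
Local Notation reach x := (connect adj r x).

Fixpoint ball k : {set V} :=
  if k is k'.+1 then ball k' :|: [set y | [exists x in ball k', adj x y]] else [set r].

Lemma ball_mono k j : k <= j -> ball k \subset ball j.
Proof.
elim: j => [|j IH]; first by rewrite leqn0 => /eqP->.
rewrite leq_eqVlt => /orP[/eqP->|/IH kj]; first exact: subxx.
exact: subset_trans kj (subsetUl _ _).
Qed.

Lemma ball_adj k x y : x \in ball k -> adj x y -> y \in ball k.+1.
Proof. by move=> xk xy; rewrite !inE; apply/orP; right; apply/existsP; exists x; rewrite xk. Qed.

Lemma ball_path k x p : x \in ball k -> path adj x p -> last x p \in ball (k + size p).
Proof.
elim: p x k => [|y p IH] x k /=; first by rewrite addn0.
by move=> xk /andP[xy yp]; rewrite addnS -addSn; apply: IH yp; apply: ball_adj xy.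
Qed.

Lemma ball_reach k x : x \in ball k -> reach x.
Proof.
elim: k x => [|k IH] x /=; first by rewrite inE => /eqP->.
by rewrite !inE => /orP[/IH //|/existsP[y /andP[/IH ry yx]]]; apply: connect_trans ry (connect1 yx).
Qed.

Lemma reach_ball x : reach x -> x \in ball (gn G).
Proof.
case/connectP=> p rp ->; case: (shortenP rp) => q rq uq _.
apply: (subsetP (ball_mono _)) (ball_path (k := 0) (set11 r) rq).
by have := max_card (mem (r :: q)); rewrite card_ord (card_uniqP uq) /=; lia.
Qed.

Definition dist x := find (fun k => x \in ball k) (iota 0 (gn G).+1).

Lemma mem_ballE x k : reach x -> (x \in ball k) = (dist x <= k).
Proof.
move=> rx; have has_ball : has (fun k => x \in ball k) (iota 0 (gn G).+1).
  by apply/hasP; exists (gn G); [rewrite mem_iota add0n ltnSn | exact: reach_ball].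
have dist_lt : dist x < (gn G).+1 by rewrite /dist -{2}(size_iota 0 (gn G).+1) -has_find.
have x_dist : x \in ball (dist x) by have := nth_find 0 has_ball; rewrite nth_iota.
apply/idP/idP => [xk|]; last by move/ball_mono/subsetP; apply.
rewrite leqNgt; apply/negP => kx.
by have := before_find 0 kx; rewrite nth_iota ?xk //; lia.
Qed.

Lemma reach_adj x y : reach x -> adj x y -> reach y.
Proof. by move=> rx xy; apply: connect_trans rx (connect1 xy). Qed.

Lemma dist_adj x y : reach x -> adj x y -> dist y <= (dist x).+1.
Proof.
move=> rx xy; rewrite -mem_ballE; last exact: reach_adj xy.
by apply: ball_adj xy; rewrite mem_ballE.
Qed.

Lemma dist_eq0 x : reach x -> (dist x == 0) = (x == r).
Proof. by move=> rx; rewrite -leqn0 -mem_ballE // inE. Qed.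

Lemma dist_far x y : reach x -> reach y -> (dist x).+1 < dist y \/ (dist y).+1 < dist x ->
  x != y /\ ~~ adj x y.
Proof.
move=> rx ry xy; split; first by apply: contraTneq isT => eq_xy; move: xy; rewrite eq_xy; lia.
apply/negP => adj_xy; have := dist_adj rx adj_xy; have := dist_adj ry (etrans (gsym _ _) adj_xy).
lia.
Qed.

Definition parent x := odflt r [pick y | adj y x && (dist y == (dist x).-1)].

Lemma parentP x : reach x -> x != r ->
  [/\ adj (parent x) x, dist (parent x) = (dist x).-1 & reach (parent x)].
Proof.
move=> rx xr; have : dist x != 0 by rewrite dist_eq0.
case dx : (dist x) => [//|k] _.
have : x \in ball k.+1 by rewrite mem_ballE // dx.
rewrite /= !inE mem_ballE // dx ltnn => /existsP[y /andP[yk yx]].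
have ry := ball_reach yk.
have dy : dist y = k.
  apply/eqP; rewrite eqn_leq -mem_ballE // yk /= leqNgt; apply/negP => ky.
  by have := dist_adj ry yx; lia.
rewrite /parent; case: pickP => [y' /andP[y'x /eqP ->]|/(_ y)]; last by rewrite yx dy dx eqxx.
by rewrite dx; split=> //; apply: connect_trans rx (connect1 _); rewrite gsym.
Qed.

Lemma iter_parent j x : reach x -> j <= dist x ->
  reach (iter j parent x) /\ dist (iter j parent x) = dist x - j.
Proof.
move=> rx; elim: j => [|j IH] jx /=; first by rewrite subn0.
have [rj dj] := IH (ltnW jx).
have jr : iter j parent x != r by rewrite -dist_eq0 // dj; lia.
by have [_ -> ?] := parentP rj jr; split=> //; rewrite dj; lia.
Qed.

Lemma iter_parent_adj j x : reach x -> j < dist x -> adj (iter j.+1 parent x) (iter j parent x).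
Proof.
move=> rx jx; have [rj dj] := iter_parent rx (ltnW jx).
have jr : iter j parent x != r by rewrite -dist_eq0 // dj; lia.
by have [] := parentP rj jr.
Qed.

(* The [i]-th copy of [P_3] is spanned by the ancestors of [x] at heights [4 i], [4 i + 1]
   and [4 i + 2]. *)
Lemma long_path_nP3 n x : reach x -> 4 * n <= dist x -> induced (nP3 n) G.
Proof.
move=> rx nx; pose t (i : 'I_n) k := iter (4 * i + k) parent x.
have tP (i : 'I_n) k : k <= 2 -> reach (t i k) /\ dist (t i k) = dist x - (4 * i + k).
  by move=> k2; apply: iter_parent => //; have := ltn_ord i; lia.
apply: (@induced_nP3 _ n (t^~ 0) (t^~ 1) (t^~ 2)) => [i|i j ij u w].
  have [[r0 d0] [r2 d2]] := (tP i 0 isT, tP i 2 isT).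
  have [ne02 nadj02] : t i 0 != t i 2 /\ ~~ adj (t i 0) (t i 2).
    by apply: dist_far => //; rewrite d0 d2; have := ltn_ord i; lia.
  have i_lt := ltn_ord i; split=> //.
    by rewrite /t addn0 addn1; apply: iter_parent_adj => //; lia.
  by rewrite /t gsym addnS; apply: iter_parent_adj => //; lia.
have far k k' : k <= 2 -> k' <= 2 -> t i k != t j k' /\ ~~ adj (t i k) (t j k').
  move=> k2 k'2; have [ri di] := tP i k k2; have [rj dj] := tP j k' k'2.
  apply: dist_far => //; rewrite di dj; have := ltn_ord i; have := ltn_ord j.
  by move: ij; rewrite -val_eqE /=; lia.
by rewrite !inE => /or3P[] /eqP-> /or3P[] /eqP->; apply: far.
Qed.

End BreadthFirst.

Section Separation.
Variable G : graph.
Local Notation V := 'I_(gn G).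
Local Notation adj := (gadj G).
Variable r : V.
Local Notation reach x := (connect adj r x).
Local Notation dist := (dist r).
Local Notation parent := (parent r).

Definition behind (v x : V) := (x != v) && ~~ connect (adj_del v) r x.

Lemma connect_del_parents v x : reach x ->
  (forall j, j <= dist x -> iter j parent x != v) -> connect (adj_del v) r x.
Proof.
move dx : (dist x) => k; elim: k x dx => [|k IH] x dx rx avoid.
  by move/eqP: dx; rewrite dist_eq0 // => /eqP ->.
have xr : x != r by rewrite -(dist_eq0 rx) dx.
have [px dp rp] := parentP rx xr.
apply: connect_trans (IH _ _ rp _) (connect1 _); first by rewrite dp dx.
  by move=> j jk; rewrite -iterSr; apply: avoid.
by rewrite adj_delE px (avoid 1) ?(avoid 0).
Qed.

Lemma behind_ancestor v x : reach x -> behind v x ->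
  dist v < dist x /\ v = iter (dist x - dist v) parent x.
Proof.
move=> rx /andP[xv xnr].
have [/existsP[j /eqP jv] | none] := boolP [exists j : 'I_(dist x).+1, iter j parent x == v];
  last first.
  case/negP: xnr; apply: connect_del_parents => // j jx; apply: contraNneq none => jv.
  by apply/existsP; exists (Ordinal (jx : j < (dist x).+1)); apply/eqP.
have jx : j <= dist x by rewrite -ltnS.
have [_ dj] := iter_parent rx jx; rewrite -jv dj.
have j0 : j != 0 :> nat by apply: contraNneq xv => j0; rewrite -jv j0.
by split; [lia | congr iter; lia].
Qed.

Lemma behind_unique v w x : reach x -> behind v x -> behind w x -> dist v = dist w -> v = w.
Proof.
move=> rx /(behind_ancestor rx)[_ vE] /(behind_ancestor rx)[_ wE] dvw.
by rewrite {1}vE dvw -wE.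
Qed.

Lemma behind_adj v y z : behind v y -> adj y z -> z != v -> behind v z.
Proof.
move=> /andP[yv ynr] yz zv; rewrite /behind zv; apply: contra ynr => rz.
by apply: connect_trans rz (connect1 _); rewrite adj_delE zv yv gsym.
Qed.

Lemma cut_vertex_behind v : reach v -> cut_vertex v -> exists a, adj v a /\ behind v a.
Proof.
move=> rv /existsP[x /existsP[y /and4P[xv yv xy xny]]].
have enter y0 : y0 != v -> connect adj y0 v -> ~~ connect (adj_del v) r y0 ->
    exists a, adj v a /\ behind v a.
  move=> y0v y0v' y0nr; have [a [av y0a]] := connect_last_neighbour y0v y0v'.
  have an : a != v by apply: contraTneq av => ->; rewrite girr.
  exists a; split; first by rewrite gsym.
  rewrite /behind an; apply: contra y0nr => ra.
  by apply: connect_trans ra _; rewrite restr_connect_sym.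
have [ry|nry] := boolP (connect (adj_del v) r y); last first.
  apply: (enter y yv _ nry); apply: (connect_through_cut (y := x) yv).
    by rewrite connect_adj_sym.
  by rewrite restr_connect_sym.
have [rx|nrx] := boolP (connect (adj_del v) r x); last first.
  exact: enter x xv (connect_through_cut xv xy xny) nrx.
by case/negP: xny; apply: connect_trans _ ry; rewrite restr_connect_sym.
Qed.

End Separation.

Definition induces_three n G := exists2 H, three_fam n H & induced H G.

Lemma induces_Kstar n G : induced (Kstar n) G -> induces_three n G.
Proof. by exists (Kstar n); first left. Qed.

Lemma induces_nP3 n G : induced (nP3 n) G -> induces_three n G.
Proof. by exists (nP3 n); first (right; left). Qed.

Lemma induces_K1star n G : induced (K1star n) G -> induces_three n G.
Proof. by exists (K1star n); first (right; right). Qed.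

Definition tower j n := iter j (expn 4) n.

Lemma leq_tower j n : n <= tower j n.
Proof. by elim: j => // j IH; apply: leq_trans IH (ltnW (ltn_expl _ (isT : 1 < 4))). Qed.

Lemma tower_gt j n : n < tower j.+1 n.
Proof. exact: leq_ltn_trans (leq_tower j n) (ltn_expl _ (isT : 1 < 4)). Qed.

Section Layer.
Variable G : graph.
Local Notation V := 'I_(gn G).
Local Notation adj := (gadj G).
Variables (r : V) (n k : nat) (X : {set V}) (a : V -> V).
Local Notation reach x := (connect adj r x).
Local Notation dist := (dist r).
Local Notation parent := (parent r).
Local Notation independent W := {in W &, forall x y : V, x != y -> adj x y = false}.

Hypothesis X_layer : {in X, forall v, [/\ reach v, dist v = k.+1 & cut_vertex v]}.
Hypothesis aP : {in X, forall v, adj v (a v) /\ behind r v (a v)}.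

Lemma pendant_dist v : v \in X -> reach (a v) /\ dist (a v) = k.+2.
Proof.
move=> vX; have [rv dv _] := X_layer vX; have [va bva] := aP vX.
have ra := reach_adj rv va; have [lt _] := behind_ancestor ra bva.
by have := dist_adj rv va; split=> //; lia.
Qed.

Lemma pendant_neq v w : v \in X -> w \in X -> a v != w.
Proof.
move=> vX wX; have [_ dw _] := X_layer wX; have [_ da] := pendant_dist vX.
by apply: contraTneq isT => avw; move: da; rewrite avw dw; lia.
Qed.

Lemma adj_pendantE v w : v \in X -> w \in X -> adj w (a v) = (w == v).
Proof.
move=> vX wX; have [va bva] := aP vX; have [->|wv] := eqVneq w v; first exact: va.
apply/negbTE/negP => wa; have bvw : behind r v w by apply: behind_adj bva _ wv; rewrite gsym.
have [rw dw _] := X_layer wX; have [_ dv _] := X_layer vX.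
by have [] := behind_ancestor rw bvw; rewrite dv dw ltnn.
Qed.

Lemma pendants_apart v w : v \in X -> w \in X -> v != w -> a v != a w /\ ~~ adj (a v) (a w).
Proof.
move=> vX wX vw; have [_ bva] := aP vX; have [_ bwa] := aP wX.
have [ra _] := pendant_dist vX; have [_ dv _] := X_layer vX; have [_ dw _] := X_layer wX.
have nbwa : ~~ behind r w (a v).
  by apply: contra vw => bwav; apply/eqP/(behind_unique ra bva bwav); rewrite dv dw.
split; first by apply: contraNneq nbwa => ->.
apply: contra nbwa => aa; apply: behind_adj bwa _ (pendant_neq vX wX); by rewrite gsym.
Qed.

Lemma low_pendant_apart z v : reach z -> dist z <= k -> v \in X -> z != a v /\ ~~ adj z (a v).
Proof.
move=> rz dz vX; have [ra da] := pendant_dist vX.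
by apply: (dist_far (r := r)) => //; left; rewrite da; lia.
Qed.

Lemma parent_layer v : v \in X -> [/\ adj (parent v) v, dist (parent v) = k & reach (parent v)].
Proof.
move=> vX; have [rv dv _] := X_layer vX.
have vr : v != r by rewrite -dist_eq0 // dv.
by have [pv -> rp] := parentP rv vr; rewrite dv.
Qed.

Lemma pendant_family (f : 'I_n -> V) : injective f -> (forall i, f i \in X) ->
  (forall i j, i != j -> a (f i) != a (f j) /\ ~~ adj (a (f i)) (a (f j))) /\
  (forall i j, f i != a (f j) /\ adj (f i) (a (f j)) = (i == j)).
Proof.
move=> f_inj fX; split=> [i j ij|i j]; first by apply: pendants_apart; rewrite ?inj_eq.
by rewrite eq_sym pendant_neq // adj_pendantE // inj_eq.
Qed.

Lemma clique_Kstar (C : {set V}) : C \subset X -> n <= #|C| ->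
  {in C &, forall x y, x != y -> adj x y} -> induced (Kstar n) G.
Proof.
move=> /subsetP CX nC cl; have [f [f_inj fC]] := pick_injective nC.
have fX i : f i \in X by apply: CX.
have [aa fa] := pendant_family f_inj fX.
apply: (induced_Kstar (c := f) (p := a \o f)) => // i j ij.
have [? ?] := aa i j ij; split=> //; first by rewrite inj_eq.
by apply: cl; rewrite ?inj_eq.
Qed.

Lemma star_K1star z (Y : {set V}) : reach z -> dist z <= k -> Y \subset X -> n <= #|Y| ->
  independent Y -> {in Y, forall v, adj z v} -> induced (K1star n) G.
Proof.
move=> rz dz /subsetP YX nY indY zY; have [f [f_inj fY]] := pick_injective nY.
have fX i : f i \in X by apply: YX.
have [aa fa] := pendant_family f_inj fX.
apply: (induced_K1star (z := z) (c := f) (p := a \o f)) => // [i|i j ij].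
  by have [? ?] := low_pendant_apart rz dz (fX i); split=> //; apply: zY.
have [? ?] := aa i j ij; split=> //; first by rewrite inj_eq.
by rewrite indY ?inj_eq.
Qed.

Lemma parent_neq v w : v \in X -> w \in X -> parent v != w.
Proof.
move=> vX wX; have [_ dp _] := parent_layer vX; have [_ dw _] := X_layer wX.
by apply/negP => /eqP pvw; move: dp; rewrite pvw dw; lia.
Qed.

Lemma parent_star_induces (W Z : {set V}) v0 : W \subset X -> independent W ->
  Z \subset W -> n < #|Z| -> v0 \in Z -> {in Z, forall v, v != v0 -> adj (parent v0) v} ->
  induces_three n G.
Proof.
move=> WX indW /subsetP ZW nZ v0Z pv0.
have ZX : Z \subset X by apply: subset_trans WX; apply/subsetP.
have [_ dp rp] := parent_layer (subsetP ZX _ v0Z).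
apply/induces_K1star/(star_K1star (z := parent v0) (Y := Z :\ v0)) => //; first by rewrite dp.
- exact: subset_trans (subD1set Z v0) ZX.
- by move: nZ; rewrite (cardsD1 v0) v0Z; lia.
- by apply: sub_in2 indW => x /setD1P[_ /ZW].
- by move=> v /setD1P[vv0 vZ]; apply: pv0.
Qed.

Section ParentFamily.
Variable f : 'I_n -> V.
Hypothesis f_inj : injective f.
Hypothesis fX : forall i, f i \in X.
Hypothesis f_apart : forall i j, i != j ->
  [/\ ~~ adj (f i) (f j), parent (f i) != parent (f j) & ~~ adj (parent (f i)) (f j)].

Lemma parents_clique_Kstar :
  (forall i j, i != j -> adj (parent (f i)) (parent (f j))) -> induced (Kstar n) G.
Proof.
move=> pp; apply: (induced_Kstar (c := fun i => parent (f i)) (p := f)) => [i j ij|i j] /=.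
  by have [? ? _] := f_apart ij; rewrite (inj_eq f_inj) pp.
rewrite parent_neq //; have [->|ij] := eqVneq i j; first by have [] := parent_layer (fX j).
by have [_ _ /negbTE] := f_apart ij.
Qed.

Lemma parents_independent_nP3 :
  (forall i j, i != j -> ~~ adj (parent (f i)) (parent (f j))) -> induced (nP3 n) G.
Proof.
move=> pp; have [aa fa] := pendant_family f_inj fX.
have low i v : v \in X -> parent (f i) != a v /\ ~~ adj (parent (f i)) (a v).
  by move=> vX; have [_ dp rp] := parent_layer (fX i); have := low_pendant_apart rp (eq_leq dp) vX.
have swap x y : x != y /\ ~~ adj x y -> y != x /\ ~~ adj y x by rewrite eq_sym gsym.
apply: (induced_nP3 (a := fun i => parent (f i)) (m := f) (b := fun i => a (f i)))
  => [i|i j ij x y] /=.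
  have [pfi _ _] := parent_layer (fX i); have [fai _] := aP (fX i).
  by rewrite gsym pfi fai; have [] := low i _ (fX i).
have ji : j != i by rewrite eq_sym.
have [ff ppij pf] := f_apart ij; have [_ _ pfji] := f_apart ji.
rewrite !inE => /or3P[] /eqP-> /or3P[] /eqP->.
- by rewrite ppij pp.
- by rewrite parent_neq.
- exact: low.
- by apply/swap; rewrite parent_neq.
- by rewrite inj_eq.
- by have [] := fa i j; rewrite (negbTE ij) => ? /negbT.
- exact/swap/low.
- by apply/swap; have [] := fa j i; rewrite (negbTE ji) => ? /negbT.
- exact: aa.
Qed.

End ParentFamily.

Lemma parents_apart_induces (W : {set V}) : W \subset X -> independent W -> 4 ^ n <= #|W| ->
  {in W &, injective parent} -> {in W &, forall x y, x != y -> ~~ adj (parent x) y} ->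
  induces_three n G.
Proof.
move=> /subsetP WX indW nW p_inj pW.
have [b [W' /subsetP W'W [nW' hW']]] := ramsey (fun x y => adj (parent x) (parent y)) nW.
have hp := homogeneous_sym (fun x y => gsym (parent x) (parent y)) hW'.
have [f [f_inj fW']] := pick_injective nW'.
have fW i : f i \in W by apply: W'W.
have fX i : f i \in X by apply: WX.
have f_apart i j : i != j ->
    [/\ ~~ adj (f i) (f j), parent (f i) != parent (f j) & ~~ adj (parent (f i)) (f j)].
  move=> ij; have fij : f i != f j by rewrite (inj_eq f_inj).
  rewrite indW ?pW //; split=> //.
  by apply: contra ij => /eqP/p_inj pij; rewrite -(inj_eq f_inj) pij.
case: b hW' hp => _ hp.
  by apply/induces_Kstar/(parents_clique_Kstar f_inj fX f_apart) => i j ij;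
    rewrite hp ?fW' // (inj_eq f_inj).
by apply/induces_nP3/(parents_independent_nP3 f_inj fX f_apart) => i j ij;
  rewrite hp ?fW' // (inj_eq f_inj).
Qed.

Lemma parents_injective_induces (W : {set V}) : W \subset X -> independent W ->
  tower 3 n <= #|W| -> {in W &, injective parent} -> induces_three n G.
Proof.
move=> WX indW nW p_inj; have W0 (Z : {set V}) : n < #|Z| -> Z != set0.
  by rewrite -card_gt0; apply: leq_ltn_trans.
have [[] [W1 W1W [nW1 hW1]]] := ramsey (fun x y => adj (parent x) y) nW.
  have [v0 v0W1 pv0] := homogeneous_min (W0 _ (leq_trans (tower_gt 1 n) nW1)) hW1.
  exact: (parent_star_induces WX indW W1W (leq_trans (tower_gt 1 n) nW1) v0W1).
have [[] [W2 W2W1 [nW2 hW2]]] := ramsey (fun x y => adj (parent y) x) nW1.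
  have [v0 v0W2 pv0] := homogeneous_max (W0 _ (leq_trans (tower_gt 0 n) nW2)) hW2.
  apply: (parent_star_induces WX indW (subset_trans W2W1 W1W)
    (leq_trans (tower_gt 0 n) nW2) v0W2) => v vW2 vv0.
  exact: pv0.
have W2W := subset_trans W2W1 W1W.
apply: (parents_apart_induces (subset_trans W2W WX)) nW2 _ _.
- by apply: sub_in2 indW; apply/subsetP.
- by apply: sub_in2 p_inj; apply/subsetP.
move=> x y xW2 yW2 xy; apply/negbT; case: (ltngtP x y) => [lt|gt|/val_inj xyE].
- by apply: hW1 (subsetP W2W1 _ xW2) (subsetP W2W1 _ yW2) lt.
- exact: hW2 yW2 xW2 gt.
- by rewrite xyE eqxx in xy.
Qed.

Lemma independent_layer_induces (W : {set V}) : W \subset X -> independent W ->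
  tower 4 n <= #|W| -> induces_three n G.
Proof.
move=> WX indW nW.
have [[] [W1 W1W [nW1 hW1]]] := ramsey (fun x y => parent x == parent y) nW.
  have W10 : W1 != set0 by rewrite -card_gt0 (leq_ltn_trans _ (leq_trans (tower_gt 2 n) nW1)).
  have [v0 v0W1 pv0] := homogeneous_min W10 hW1.
  apply: (parent_star_induces WX indW W1W (leq_trans (tower_gt 2 n) nW1) v0W1) => v vW1 vv0.
  rewrite (eqP (pv0 v vW1 vv0)).
  by have [] := parent_layer (subsetP (subset_trans W1W WX) _ vW1).
apply: (parents_injective_induces (subset_trans W1W WX)) nW1 _.
  by apply: sub_in2 indW; apply/subsetP.
move=> x y xW1 yW1 /eqP pxy; apply/eqP; apply: contraTT pxy => xy.
by rewrite (homogeneous_sym (fun x y => eq_sym (parent x) (parent y)) hW1).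
Qed.

Lemma layer_induces : tower 5 n <= #|X| -> induces_three n G.
Proof.
move=> nX; have [[] [W WX [nW hW]]] := ramsey adj nX;
  have hW' := homogeneous_sym (@gsym G) hW.
  apply/induces_Kstar/(clique_Kstar WX) => [|x y xW yW xy].
    exact: leq_trans (leq_tower 4 n) nW.
  by rewrite hW'.
exact: independent_layer_induces WX hW' nW.
Qed.

End Layer.

Lemma exists_ge_injective_in (T : finType) (Y : {set T}) (f : T -> nat) m :
  {in Y &, injective f} -> m < #|Y| -> exists2 v, v \in Y & m <= f v.
Proof.
move=> f_inj mY; apply/exists_inP; apply: contraTT mY => /exists_inPn small.
rewrite -leqNgt cardE -(size_map f) -[m in _ <= m](size_iota 0 m).
apply: uniq_leq_size => [|_ /mapP[v vY ->]].
  by rewrite map_inj_in_uniq ?enum_uniq // => x y; rewrite !mem_enum; apply: f_inj.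
by rewrite mem_iota /= add0n ltnNge small // -mem_enum.
Qed.

Section Counting.
Variable G : graph.
Local Notation V := 'I_(gn G).
Local Notation adj := (gadj G).

Lemma disconnected_apart x y u w : connect adj x u -> connect adj y w -> ~~ connect adj x y ->
  u != w /\ ~~ adj u w.
Proof.
move=> xu yw; rewrite (connect_adj_sym y) in yw; move=> xny; split.
  by apply: contraNneq xny => uw; apply: connect_trans xu _; rewrite uw.
by apply: contra xny => uw; apply: connect_trans xu (connect_trans (connect1 uw) yw).
Qed.

Lemma disconnected_cut_vertices_nP3 n (W : {set V}) : {in W, forall v, cut_vertex v} ->
  {in W &, forall x y, x != y -> ~~ connect adj x y} -> n <= #|W| -> induced (nP3 n) G.
Proof.
move=> Wcut Wdis nW; have [f [f_inj fW]] := pick_injective nW.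
have /fin_all_exists[ab abP] : forall i, exists ab : V * V,
    [/\ adj (f i) ab.1, adj (f i) ab.2, ab.1 != ab.2 & ~~ adj ab.1 ab.2].
  by move=> i; have [a [b abP]] := cut_vertex_neighbours (Wcut _ (fW i)); exists (a, b).
apply: (induced_nP3 (a := fun i => (ab i).1) (m := f) (b := fun i => (ab i).2)) => // i j ij x y.
have [fa fb _ _] := abP i; have [ga gb _ _] := abP j.
have fij : ~~ connect adj (f i) (f j) by apply: Wdis; rewrite ?inj_eq.
by rewrite !inE => /or3P[] /eqP-> /or3P[] /eqP->; apply: disconnected_apart fij;
  rewrite ?connect0 // connect1.
Qed.

Lemma rooted_cut_vertices_induce n r (Y : {set V}) :
  {in Y, forall v, [/\ connect adj r v, v != r & cut_vertex v]} ->
  4 ^ (tower 5 n + 4 * n + 1) <= #|Y| -> induces_three n G.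
Proof.
move=> Yroot nY; have dist_sym := fun x y => eq_sym (dist r x) (dist r y).
have [b [Z /subsetP ZY [nZ hZ]]] := ramsey (fun x y => dist r x == dist r y) nY.
have {}hZ := homogeneous_sym dist_sym hZ; case: b hZ => hZ; last first.
  have d_inj : {in Z &, injective (dist r)}.
    move=> x y xZ yZ /eqP dxy; apply/eqP; apply: contraTT dxy => xy.
    by rewrite hZ.
  have [|v vZ dv] := exists_ge_injective_in d_inj (m := 4 * n); first by lia.
  have [rv _ _] := Yroot v (ZY _ vZ).
  exact/induces_nP3/(long_path_nP3 rv dv).
have /set0Pn[v0 v0Z] : Z != set0 by rewrite -card_gt0; lia.
have [rv0 v0r _] := Yroot v0 (ZY _ v0Z).
have [k dk] : exists k, dist r v0 = k.+1.
  by case Ed: (dist r v0) => [|k]; [move/eqP: Ed; rewrite dist_eq0 // (negbTE v0r) | exists k].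
have Zlayer : {in Z, forall v, [/\ connect adj r v, dist r v = k.+1 & cut_vertex v]}.
  move=> v vZ; have [rv _ cv] := Yroot v (ZY _ vZ); split=> //.
  by have [->|vv0] := eqVneq v v0; last by rewrite -dk; apply/eqP; rewrite hZ.
have /fin_all_exists[a aP] : forall v : V, exists a, v \in Z -> adj v a /\ behind r v a.
  move=> v; have [vZ|vZ] := boolP (v \in Z); last by exists v.
  by have [rv _ cv] := Zlayer v vZ; have [a' ?] := cut_vertex_behind rv cv; exists a'.
by apply: (layer_induces Zlayer aP); lia.
Qed.

Definition cut_bound n := 4 ^ (4 ^ (tower 5 n + 4 * n + 1)).+1.

Lemma cut_vertices_induce n : cut_bound n <= #|[set v : V | cut_vertex v]| -> induces_three n G.
Proof.
move=> nC; have [b [W /subsetP WC [nW hW]]] := ramsey (connect adj) nC.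
have {}hW := homogeneous_sym (@connect_adj_sym G) hW; case: b hW => hW; last first.
  apply/induces_nP3/(disconnected_cut_vertices_nP3 (W := W)) => [v /WC|x y xW yW xy|].
  - by rewrite inE.
  - by rewrite hW.
  apply: leq_trans nW; apply: leqW; apply: ltnW; apply: leq_ltn_trans (ltn_expl _ (isT : 1 < 4)).
  lia.
have /set0Pn[r rW] : W != set0 by rewrite -card_gt0; apply: leq_trans nW.
apply: (rooted_cut_vertices_induce (r := r) (Y := W :\ r)).
  move=> v /setD1P[vr vW]; split=> //; first by rewrite hW // eq_sym.
  by have := WC v vW; rewrite inE.
by move: nW; rewrite (cardsD1 r W) rW; lia.
Qed.

End Counting.

Lemma leq_card_cut_vertices G m (h : 'I_m -> 'I_(gn G)) :
  injective h -> (forall i, cut_vertex (h i)) -> m <= #|[set v : 'I_(gn G) | cut_vertex v]|.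
Proof.
move=> h_inj hcut; rewrite -{1}(card_ord m) -(card_imset _ h_inj).
by apply/subset_leq_card/subsetP => _ /imsetP[i _ ->]; rewrite inE.
Qed.

Lemma Kstar_cut_vertices n : 1 < n -> n <= #|[set v : 'I_(gn (Kstar n)) | cut_vertex v]|.
Proof.
move=> n1; apply: (@leq_card_cut_vertices (Kstar n) _ (fun i => unsplit (inl i))).
  by move=> i j /= /lshift_inj.
move=> i; have [j ji] : exists j : 'I_n, j != i.
  by exists (Ordinal (leq_ltn_trans (leq_b1 (val i == 0)) n1)); rewrite -val_eqE /=; lia.
apply: (@pendant_cut_vertex (Kstar n) _ (unsplit (inr i)) (unsplit (inl j))).
- by rewrite Kstar_adjE.
- by move=> z; rewrite -(splitK z) Kstar_adjE; case: (split z) => // k /eqP ->.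
- by rewrite Kstar_adjE eq_sym.
- by rewrite (can_eq unsplitK).
Qed.

Lemma K1star_cut_vertices n : n <= #|[set v : 'I_(gn (K1star n)) | cut_vertex v]|.
Proof.
apply: (@leq_card_cut_vertices _ _ (fun i => K1star_vertex (Some (inl i)))).
  by move=> i j /(can_inj (@K1star_vertexK n)) [].
move=> i; apply: (@pendant_cut_vertex _ _ (K1star_vertex (Some (inr i))) (K1star_vertex None)).
- by rewrite K1star_adjE.
- move=> z; rewrite -(K1star_roleK z) K1star_adjE.
  by case: (K1star_role z) => [[k|k]|] // /eqP ->.
- by rewrite K1star_adjE.
- by rewrite (can_eq (@K1star_vertexK n)).
Qed.

Lemma nP3_cut_vertices n : n <= #|[set v : 'I_(gn (nP3 n)) | cut_vertex v]|.
Proof.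
pose role s (s3 : s < 3) : 'I_3 := Ordinal s3.
apply: (@leq_card_cut_vertices _ _ (fun q => nP3_vertex (q, role 1 isT))).
  by move=> q q' /(can_inj (@nP3_vertexK n)) [].
move=> q; apply: (@pendant_cut_vertex _ _ (nP3_vertex (q, role 0 isT))
  (nP3_vertex (q, role 2 isT))).
- by rewrite nP3_adjE /= eqxx.
- move=> z; rewrite -(nP3_roleK z) nP3_adjE; case: (nP3_role z) => q' s /= /andP[/eqP <-].
  by case: s => -[|[|[|?]]] // s3 _; congr nP3_vertex; congr pair; apply: val_inj.
- by rewrite nP3_adjE /= eqxx.
- by rewrite (can_eq (@nP3_vertexK n)) xpair_eqE eqxx.
Qed.

Lemma three_fam_cut_vertices n H : 1 < n -> three_fam n H ->
  n <= #|[set v : 'I_(gn H) | cut_vertex v]|.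
Proof.
by move=> n1 [->|[->|->]]; rewrite ?Kstar_cut_vertices ?nP3_cut_vertices ?K1star_cut_vertices.
Qed.

Theorem corollary1p11 (F : gfamily) :
  (exists c : nat, forall G : graph, Hfree F G ->
      #|[set v : 'I_(gn G) | (2%:Z <= @sdeg G v)%R]| < c)
  <->
  (exists n : nat, 0 < n /\ fam_le F (three_fam n)).
Proof.
have sdegE G : [set v : 'I_(gn G) | (2%:Z <= sdeg v)%R] = [set v | cut_vertex v].
  by apply/setP => v; rewrite !inE sdeg_ge2E.
(* The bound [cut_bound n] works for every [n]. *)
split=> [[c small]|[n [_ Fle]]].
  exists c.+2; split=> // H H3; apply: NNPP => noF.
  have /small : Hfree F H by move=> H1 FH1 iH1; apply: noF; exists H1.
  have : c <= #|[set v : 'I_(gn H) | cut_vertex v]|.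
    exact: leq_trans (leqW (leqnSn c)) (three_fam_cut_vertices _ H3).
  by rewrite sdegE ltnNge => ->.
exists (cut_bound n) => G FG; rewrite sdegE ltnNge; apply/negP => /cut_vertices_induce[H Hn iH].
by have [H1 FH1 iH1] := Fle H Hn; apply: FG FH1 (induced_trans iH1 iH).
Qed.
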